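(* Let $n\ge2$, $m\ge1$, and let $G$ be given by the presentation $$G=\Big\langle a_1,\dots,a_n,c_1,\dots,c_m \ \Big|\ [a_i,a_j]=\prod_{t=1}^m c_t^{\lambda_t^{ij}}\ (1\le i<j\le n),\ [a_i,c_j]=[c_k,c_r]=1 \text{ for all } i,j,k,r\Big\rangle$$ for some integers $\lambda_t^{ij}$; write $A=\{a_1,\dots,a_n\}$, $C=\{c_1,\dots,c_m\}$. Then: (1) $G$ is finitely generated, torsion-free and $2$-step nilpotent, and $(A;C)$ is a Malcev basis of $G$; (2) $Z(G)$ has a basis of the form $C\cup D$ for some set $D$; (3) $\mathrm{rank}(G/Z(G))=n-|D|$; (4) $\mathrm{rank}(G/Z(G))+\mathrm{rank}(Z(G))=n+m$; (5) $\mathrm{rank}(G')\le m\le\mathrm{rank}(Z(G))$.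
   Context: Commutators: $[g,h]=g^{-1}h^{-1}gh$. A group is $2$-step nilpotent if all commutators are central. A Malcev basis of such a group is a pair $(A;C)$ with $C$ a basis of a free abelian subgroup with $G'\le\langle C\rangle\le Z(G)$ and $A$ such that $G/\langle C\rangle$ is free abelian with basis $\{a\langle C\rangle\mid a\in A\}$. The rank of a finitely generated abelian group is the minimum cardinality of a generating set. *)

(* Groups are MathComp's (possibly infinite) [groupType]
   from boot/monoid.v; commutator [~ x, y] = x^-1 * y^-1 * x * y. *)
From HB Require Import structures.
From mathcomp Require Import all_boot all_order all_algebra.
Set Implicit Arguments. Unset Strict Implicit. Unset Printing Implicit Defensive.

Local Open Scope group_scope.

Section GroupDefs.
Variable G : groupType.

Definition zexpg (x : G) (k : int) : G :=
  match k with Posz p => x ^+ p | Negz p => (x ^+ p.+1)^-1 end.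

Definition gen (S : G -> Prop) (x : G) : Prop :=
  forall P : G -> Prop, P 1 -> (forall u v, P u -> P v -> P (u * v^-1)) ->
    (forall u, S u -> P u) -> P x.

Definition center (z : G) : Prop := forall g : G, g * z = z * g.

Definition derived (x : G) : Prop := gen (fun y => exists g h, y = [~ g, h]) x.

Definition fin_gen : Prop := exists s : seq G, forall x, gen (fun y => y \in s) x.

Definition torsion_free : Prop :=
  forall (x : G) (k : nat), (0 < k)%N -> x ^+ k = 1 -> x = 1.

Definition two_step_nilpotent : Prop := forall g h : G, center [~ g, h].

Definition range {k : nat} (f : 'I_k -> G) (y : G) : Prop := exists i, y = f i.

Definition malcev_basis {n m : nat} (a : 'I_n -> G) (c : 'I_m -> G) : Prop :=
  (forall s t, c s * c t = c t * c s) /\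
  (forall u : 'I_m -> int, \prod_(t < m) zexpg (c t) (u t) = 1 -> forall t, u t = 0) /\
  (forall x, derived x -> gen (range c) x) /\
  (forall x, gen (range c) x -> center x) /\
  (* G/<C> free abelian with basis {a_i <C>} *)
  (forall g h : G, gen (range c) [~ g, h]) /\
  (forall g : G, exists u : 'I_n -> int,
      gen (range c) ((\prod_(i < n) zexpg (a i) (u i))^-1 * g)) /\
  (forall u : 'I_n -> int, gen (range c) (\prod_(i < n) zexpg (a i) (u i)) ->
      forall i, u i = 0).

Definition center_basis {m k : nat} (c : 'I_m -> G) (d : 'I_k -> G) : Prop :=
  (forall t, center (c t)) /\ (forall i, center (d i)) /\
  (forall x, center x <-> gen (fun y => range c y \/ range d y) x) /\
  (forall (u : 'I_m -> int) (v : 'I_k -> int),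
     \prod_(t < m) zexpg (c t) (u t) * \prod_(i < k) zexpg (d i) (v i) = 1 ->
     (forall t, u t = 0) /\ (forall i, v i = 0)).

Definition is_rank_sub (S : G -> Prop) (r : nat) : Prop :=
  (exists g : 'I_r -> G, (forall i, S (g i)) /\ (forall x, S x <-> gen (range g) x)) /\
  (forall (r' : nat) (g : 'I_r' -> G), (forall i, S (g i)) ->
      (forall x, S x <-> gen (range g) x) -> (r <= r')%N).

(* rank of G/Z(G): a family of cosets g_i Z(G) generates G/Z(G) iff
   the g_i together with Z(G) generate G *)
Definition is_rank_quot_center (r : nat) : Prop :=
  (exists g : 'I_r -> G, forall x, gen (fun y => center y \/ range g y) x) /\
  (forall (r' : nat) (g : 'I_r' -> G),
      (forall x, gen (fun y => center y \/ range g y) x) -> (r <= r')%N).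

End GroupDefs.

Definition pres_rels (H : groupType) {n m : nat}
    (lam : 'I_n -> 'I_n -> 'I_m -> int) (a : 'I_n -> H) (c : 'I_m -> H) : Prop :=
  (forall i j : 'I_n, (i < j)%N ->
      [~ a i, a j] = \prod_(t < m) zexpg (c t) (lam i j t)) /\
  (forall (i : 'I_n) (j : 'I_m), [~ a i, c j] = 1) /\
  (forall k r : 'I_m, [~ c k, c r] = 1).

Definition presented_by (G : groupType) {n m : nat}
    (lam : 'I_n -> 'I_n -> 'I_m -> int) (a : 'I_n -> G) (c : 'I_m -> G) : Prop :=
  pres_rels lam a c /\
  (forall x : G, gen (fun y => range a y \/ range c y) x) /\
  (forall (H : groupType) (a' : 'I_n -> H) (c' : 'I_m -> H), pres_rels lam a' c' ->
     exists f : G -> H, (forall x y, f (x * y) = f x * f y) /\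
       (forall i, f (a i) = a' i) /\ (forall j, f (c j) = c' j)).

(* The group [heis (pres_form lam)] is Z^n x Z^m with product
   (x, z) (y, w) = (x + y, z + w + b(x, y)),  b(x, y) = sum_(i < j) x_i y_j lam^{ij}.
   It satisfies the defining relations, so the universal property yields a morphism f from G
   sending a_i and c_t to the unit vectors. In G the c_t are central and every commutator lies
   in C = <c_1, ..., c_m>; collecting modulo C writes every element as a^u c^w, and f reads off
   u and w, so f is injective. Everything then becomes integer linear algebra on coordinates:
   g is central iff the first coordinate of f g lies in the integral kernel of the commutator
   form, which the Smith normal form splits off as a direct summand; this yields the basis
   C u D of Z(G) and complementary generators of G/Z(G). G' is the subgroup of C ~ Z^m spanned
   by the commutator vectors, which the Smith normal form again generates by m elements.
   Ranks are bounded below by the dimensions of the rational vector spaces they map onto. *)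

From HB Require Import structures.
From mathcomp Require Import all_boot all_order all_algebra.
From mathcomp Require Import ring.
From Stdlib Require Import Classical Wf_nat.

Set Implicit Arguments. Unset Strict Implicit. Unset Printing Implicit Defensive.
Import GRing.Theory Num.Theory.

Lemma ex_minn_prop (P : nat -> Prop) k : P k -> exists2 r, P r & forall r', P r' -> (r <= r')%N.
Proof.
move=> Pk; have [r [[Pr r_min] _]] :=
  dec_inh_nat_subset_has_unique_least_element P (fun r => classic (P r)) (ex_intro _ k Pk).
by exists r => // r' /r_min/leP.
Qed.

(** * Integer powers and generated subgroups *)

Section IntegerPowers.
Variable G : groupType.
Local Open Scope group_scope.
Implicit Types x y : G.

Lemma zexpg_subn x (p q : nat) : zexpg x (p%:Z - q%:Z)%R = x ^+ p * (x ^+ q)^-1.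
Proof.
case: (leqP q p) => hqp.
  by rewrite subzn //= expgnFr.
have -> : (p%:Z - q%:Z)%R = Negz (q - p).-1.
  by rewrite NegzE prednK ?subn_gt0 // -opprB subzn // ltnW.
rewrite /= prednK ?subn_gt0 // -{2}(subnK (ltnW hqp)) expgnDr invgM.
by rewrite mulgA mulgV mul1g.
Qed.

Lemma int_subn (k : int) : exists p q : nat, k = (p%:Z - q%:Z)%R.
Proof.
by case: k => p; [exists p, 0%N; rewrite subr0 | exists 0%N, p.+1; rewrite NegzE sub0r].
Qed.

Lemma zexpg1 x : zexpg x 1 = x. Proof. exact: expg1. Qed.

Lemma zexpgD x (k l : int) : zexpg x (k + l)%R = zexpg x k * zexpg x l.
Proof.
have [p1 [q1 ->]] := int_subn k; have [p2 [q2 ->]] := int_subn l.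
have -> : ((p1%:Z - q1%:Z) + (p2%:Z - q2%:Z))%R = ((p1 + p2)%N%:Z - (q1 + q2)%N%:Z)%R.
  by rewrite !PoszD; ring.
have cx i j : commute (x ^+ i)^-1 (x ^+ j) by apply/commute_sym/commuteV/commuteX2.
rewrite !zexpg_subn !expgnDr invgM -!mulgA; congr (_ * _).
by rewrite [RHS]mulgA [_ * x ^+ p2]cx -mulgA (commuteV (cx q2 q1)).
Qed.

Lemma commute_zexpg x y (k l : int) : commute x y -> commute (zexpg x k) (zexpg y l).
Proof.
move=> cxy; have cX p q : commute (x ^+ p) (y ^+ q) by exact: commuteX2.
case: k => p; case: l => q /=; first exact: cX.
- exact/commuteV.
- exact/commute_sym/commuteV/commute_sym.
- exact/commuteV/commute_sym/commuteV/commute_sym.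
Qed.

End IntegerPowers.

Section Generation.
Variable G : groupType.
Local Open Scope group_scope.
Implicit Types (x y : G) (S T : G -> Prop).

Lemma gen_ind S (P : G -> Prop) : P 1 -> (forall u v, P u -> P v -> P (u * v^-1)) ->
  (forall u, S u -> P u) -> forall x, gen S x -> P x.
Proof. by move=> P1 PB PS x; apply. Qed.

Lemma gen_mem S x : S x -> gen S x.
Proof. by move=> Sx P _ _; apply. Qed.

Lemma gen1 S : gen S 1.
Proof. by []. Qed.

Lemma genV S x : gen S x -> gen S x^-1.
Proof. by move=> Sx P P1 PB PS; rewrite -[x^-1]mul1g; apply: PB (Sx P P1 PB PS). Qed.

Lemma genM S x y : gen S x -> gen S y -> gen S (x * y).
Proof.
move=> Sx /genV Sy P P1 PB PS; rewrite -[y]invgK.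
exact: PB (Sx P P1 PB PS) (Sy P P1 PB PS).
Qed.

Lemma gen_zexpg S x k : gen S x -> gen S (zexpg x k).
Proof.
move=> Sx; have SX p : gen S (x ^+ p).
  by elim: p => [|p IHp]; rewrite ?expgS; [apply: gen1 | apply: genM].
by case: k => p /=; last apply: genV.
Qed.

Lemma gen_prod S (I : finType) (F : I -> G) : (forall i, gen S (F i)) -> gen S (\prod_i F i).
Proof. by move=> SF; apply: big_ind => //; apply: genM. Qed.

Lemma gen_trans S T x : (forall y, S y -> gen T y) -> gen S x -> gen T x.
Proof. by move=> ST; apply: gen_ind => // u v Tu /genV; apply: genM. Qed.

Lemma gen_mono S T x : (forall y, S y -> T y) -> gen S x -> gen T x.
Proof. by move=> ST; apply: gen_trans => y /ST /gen_mem. Qed.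

Lemma center1 : center (1 : G).
Proof. by move=> g; rewrite mulg1 mul1g. Qed.

Lemma centerM x y : center x -> center y -> center (x * y).
Proof. by move=> cx cy g; rewrite mulgA cx -!mulgA cy. Qed.

Lemma centerV x : center x -> center x^-1.
Proof. by move=> cx g; apply/commuteV/cx. Qed.

Lemma center_gen S x : (forall y, S y -> center y) -> gen S x -> center x.
Proof.
move=> SZ; apply: gen_ind => [|u v cu cv|//]; first exact: center1.
exact/centerM/centerV.
Qed.

Lemma center_gen_commute T x : (forall g, gen T g) -> (forall y, T y -> commute y x) -> center x.
Proof.
move=> genT Tx g; move: g (genT g); apply: gen_ind => [|u v cu cv|//].
  exact/commute_sym/commute1.
by apply/commute_sym/commuteM; [apply/commute_sym | apply/commuteV/commute_sym].
Qed.

Lemma conjg_center x y : center x -> x ^ y = x.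
Proof. by move=> cx; rewrite conjgE -cx mulKg. Qed.

Lemma commMg_center x y z : center [~ x, z] -> [~ x * y, z] = [~ x, z] * [~ y, z].
Proof.
have -> : [~ x * y, z] = [~ x, z] ^ y * [~ y, z].
  by rewrite !commgEr conjgM mulgA -conjMg mulgK.
by move/conjg_center->.
Qed.

Lemma commg_gen_generators S T :
  (forall g, gen T g) -> (forall y, S y -> center y) ->
  (forall u v, T u -> T v -> gen S [~ u, v]) -> forall x y, gen S [~ x, y].
Proof.
move=> genT SZ ST.
have commL w : (forall u, T u -> gen S [~ u, w]) -> forall v, gen S [~ v, w].
  move=> Tw v; move: v (genT v); apply: gen_ind => [|u v' Su Sv'|//]; first by rewrite comm1g.
  have cZ x : gen S x -> center x by apply: center_gen.
  have SV : gen S [~ v'^-1, w].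
    have := commMg_center v'^-1 (cZ _ Sv'); rewrite mulgV comm1g => /esym/mulg1_eq <-.
    exact: genV.
  by rewrite (commMg_center _ (cZ _ Su)); apply: genM.
have commT x u : T u -> gen S [~ x, u].
  by move=> Tu; apply: commL => v Tv; apply: ST.
by move=> x y; apply: commL => u Tu; rewrite -invgR; apply: genV; apply: commT.
Qed.

End Generation.

(** * Products of integer powers *)

Definition prodz (G : groupType) (I : finType) (e : I -> G) (u : I -> int) : G :=
  \prod_i zexpg (e i) (u i).

Section CommutingFamily.
Variables (G : groupType) (I : finType) (e : I -> G).
Local Open Scope group_scope.

Lemma eq_prodz u v : (forall t, u t = v t) -> prodz e u = prodz e v.
Proof. by move=> uv; apply: eq_bigr => t _; rewrite uv. Qed.

Lemma prodz0 : prodz e (fun _ => 0%R) = 1.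
Proof. exact: big1. Qed.

Lemma prodz_eq1 u : (forall i, u i = 0%R) -> prodz e u = 1.
Proof. by move=> u0; rewrite -prodz0; apply: eq_prodz. Qed.

Lemma prodz_delta t : prodz e (fun s => (s == t)%:R%R) = e t.
Proof.
by rewrite /prodz (big_only1 t) //= ?eqxx ?zexpg1 // => s /negbTE->.
Qed.

Hypothesis e_comm : forall s t, commute (e s) (e t).

Lemma prodzD u v : prodz e u * prodz e v = prodz e (fun t => u t + v t)%R.
Proof.
rewrite /prodz -prodgM_commute => [|s t _ _]; last exact: commute_zexpg.
by apply: eq_bigr => t _; rewrite zexpgD.
Qed.

Lemma prodzN u : (prodz e u)^-1 = prodz e (fun t => - u t)%R.
Proof. by apply: mulg1_eq; rewrite prodzD -prodz0; apply: eq_prodz => t; rewrite subrr. Qed.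

Hypothesis e_indep : forall u, prodz e u = 1 -> forall t, u t = 0%R.

Lemma prodz_inj u v : prodz e u = prodz e v -> forall t, u t = v t.
Proof.
move=> uv t; apply/eqP; rewrite -subr_eq0; apply/eqP.
by apply: (e_indep (u := fun t => u t - v t)%R); rewrite -prodzD -prodzN uv mulgV.
Qed.

End CommutingFamily.

Lemma gen_prodz (G : groupType) k (e : 'I_k -> G) u : gen (range e) (prodz e u).
Proof. by apply: gen_prod => t; apply: gen_zexpg; apply: gen_mem; exists t. Qed.

Lemma gen_rangeP (G : groupType) k (e : 'I_k -> G) x :
  (forall s t, commute (e s) (e t)) -> gen (range e) x -> exists u, x = prodz e u.
Proof.
move=> e_comm; move: x; apply: gen_ind => [|_ _ [u ->] [v ->]|_ [t ->]].
- by exists (fun _ => 0%R); rewrite prodz0.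
- by exists (fun t => u t - v t)%R; rewrite prodzN // prodzD.
- by exists (fun s => (s == t)%:R%R); rewrite prodz_delta.
Qed.

Section GroupMorphisms.
Variables (G H : groupType) (f : G -> H).
Hypothesis fM : {morph f : x y / (x * y)%g}.
Local Open Scope group_scope.

Lemma morph1 : f 1 = 1.
Proof. by apply: (mulgI (f 1)); rewrite -fM !mulg1. Qed.

Lemma morphV x : f x^-1 = (f x)^-1.
Proof. by apply/esym/mulg1_eq; rewrite -fM mulgV morph1. Qed.

Lemma morphX x p : f (x ^+ p) = f x ^+ p.
Proof. by elim: p => [|p IHp]; rewrite ?morph1 // !expgS fM IHp. Qed.

Lemma morph_zexpg x k : f (zexpg x k) = zexpg (f x) k.
Proof. by case: k => p /=; rewrite ?morphV morphX. Qed.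

Lemma morph_prodz (I : finType) (e : I -> G) u : f (prodz e u) = prodz (fun i => f (e i)) u.
Proof.
rewrite /prodz (big_morph f fM morph1).
by apply: eq_bigr => i _; rewrite morph_zexpg.
Qed.

Lemma morph_commg x y : f [~ x, y] = [~ f x, f y].
Proof. by rewrite /commg /conjg !fM !morphV. Qed.

Lemma morph_injP : (forall x, f x = 1 -> x = 1) -> injective f.
Proof.
move=> ker1 x y fxy; apply/esym/divg1_eq/ker1.
by rewrite fM morphV fxy mulgV.
Qed.

End GroupMorphisms.

(** * Lower bounds on ranks *)

Section RankBounds.
Local Open Scope ring_scope.

Definition intr_row (k : nat) (u : 'I_k -> int) : 'rV[rat]_k := \row_t (u t)%:~R.

Lemma intr_rowB k (u v : 'I_k -> int) :
  intr_row (fun t => u t - v t) = intr_row u - intr_row v.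
Proof. by apply/rowP => t; rewrite !mxE intrB. Qed.

Lemma delta_submx_leq (F : fieldType) (N r : nat) (M : 'M[F]_(r, N)) :
  (forall p, (delta_mx 0 p : 'rV[F]_N) <= M)%MS -> (N <= r)%N.
Proof.
move=> sM; have /mxrankS : (1%:M <= M)%MS by apply/row_subP => p; rewrite row1.
by rewrite mxrank1 => /leq_trans; apply; apply: rank_leq_row.
Qed.

Lemma free_basis_size_leq (G : groupType) (N r : nat) (e : 'I_N -> G) (g : 'I_r -> G) :
  (forall s t, commute (e s) (e t)) -> (forall u, prodz e u = 1%g -> forall t, u t = 0) ->
  (forall i, gen (range e) (g i)) -> (forall t, gen (range g) (e t)) -> (N <= r)%N.
Proof.
move=> e_comm e_indep ge eg.
have /fin_all_exists [U gU] i : exists u, g i = prodz e u by apply: gen_rangeP.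
pose M := \matrix_i intr_row (U i).
have span x : gen (range g) x -> exists2 u, x = prodz e u & (intr_row u <= M)%MS.
  move: x; apply: gen_ind => [|_ _ [u -> uM] [v -> vM]|_ [i ->]].
  - exists (fun _ => 0%R); first by rewrite prodz0.
    by rewrite (_ : intr_row _ = 0%R) ?sub0mx //; apply/rowP => t; rewrite !mxE.
  - exists (fun t => u t - v t)%R; first by rewrite prodzN // prodzD.
    by rewrite intr_rowB addmx_sub // -scaleN1r scalemx_sub.
  - by exists (U i) => //; rewrite -(rowK (fun i => intr_row (U i))) row_sub.
apply: (delta_submx_leq (M := M)) => t; have [u et uM] := span _ (eg t).
suff -> : delta_mx 0 t = intr_row u by [].
rewrite -(prodz_delta e t) in et; apply/rowP => s; rewrite !mxE.
by rewrite -(prodz_inj e_comm e_indep et s); case: (s == t).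
Qed.

Lemma gen_morph_submx (G : groupType) (F : fieldType) (N r : nat) (S : G -> Prop)
    (theta : G -> 'rV[F]_N) (M : 'M[F]_(r, N)) :
  (forall x y, theta (x * y)%g = (theta x + theta y)%R) ->
  (forall x, S x -> (theta x <= M)%MS) -> forall x, gen S x -> (theta x <= M)%MS.
Proof.
move=> thetaM SM.
have theta1 : theta 1%g = 0.
  by apply: (addrI (theta 1%g)); rewrite addr0 -thetaM mulg1.
have thetaV x : theta x^-1%g = - theta x.
  by apply: (addrI (theta x)); rewrite -thetaM mulgV theta1 subrr.
apply: gen_ind => [|u v uM vM|//]; first by rewrite theta1 sub0mx.
by rewrite thetaM thetaV addmx_sub // -scaleN1r scalemx_sub.
Qed.

End RankBounds.

(** * Commutators in a central subgroup *)

Definition eqmodg (G : groupType) (S : G -> Prop) (x y : G) : Prop := gen S (x^-1 * y)%g.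

Section CentralCommutators.
Variables (G : groupType) (S : G -> Prop).
Local Open Scope group_scope.
Implicit Types x y z : G.

Lemma eqmodg_refl x : eqmodg S x x.
Proof. by rewrite /eqmodg mulVg. Qed.

Lemma eqmodg_sym x y : eqmodg S x y -> eqmodg S y x.
Proof. by move/genV; rewrite /eqmodg invgM invgK. Qed.

Lemma eqmodg_trans y x z : eqmodg S x y -> eqmodg S y z -> eqmodg S x z.
Proof. by move=> xy /(genM xy); rewrite /eqmodg mulgA mulgK. Qed.

Hypothesis S_central : forall y, S y -> center y.
Hypothesis comm_genS : forall x y, gen S [~ x, y].

Lemma eqmodgM x x' y y' : eqmodg S x x' -> eqmodg S y y' -> eqmodg S (x * y) (x' * y').
Proof.
move=> xx' yy'; have /(_ y^-1) cx := center_gen S_central xx'.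
by move: (genM xx' yy'); rewrite /eqmodg invgM !mulgA -(mulgA y^-1) -cx !mulgA.
Qed.

Lemma eqmodgV x y : eqmodg S x y -> eqmodg S x^-1 y^-1.
Proof.
move/eqmodg_sym=> yx; rewrite /eqmodg invgK.
have : x * (y^-1 * x) = y^-1 * x * x by apply: center_gen S_central yx x.
by rewrite mulgA => /mulIg ->.
Qed.

Lemma eqmodgC x y : eqmodg S (x * y) (y * x).
Proof. by rewrite /eqmodg invgM -!mulgA; apply: comm_genS. Qed.

Lemma prod_eqmodg (I : Type) (s : seq I) (F H : I -> G) :
  eqmodg S (\prod_(i <- s) (F i * H i)) (\prod_(i <- s) F i * \prod_(i <- s) H i).
Proof.
elim: s => [|i s IHs]; first by rewrite !big_nil mulg1; exact: eqmodg_refl.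
rewrite !big_cons -!mulgA; apply: eqmodgM; first exact: eqmodg_refl.
apply: eqmodg_trans (eqmodgM (eqmodg_refl _) IHs) _.
by rewrite !mulgA; apply: eqmodgM (eqmodg_refl _); apply: eqmodgC.
Qed.

Lemma prodzD_eqmodg (I : finType) (e : I -> G) u v :
  eqmodg S (prodz e (fun t => u t + v t)%R) (prodz e u * prodz e v).
Proof.
rewrite /prodz (eq_bigr (fun t => zexpg (e t) (u t) * zexpg (e t) (v t))) => [|t _].
  exact: prod_eqmodg.
exact: zexpgD.
Qed.

Lemma prodzN_eqmodg (I : finType) (e : I -> G) u :
  eqmodg S (prodz e u)^-1 (prodz e (fun t => - u t)%R).
Proof.
have A0 : prodz e (fun t => u t - u t)%R = 1.
  by rewrite -(prodz0 e); apply: eq_prodz => t; rewrite subrr.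
rewrite -[X in eqmodg S X _]mulg1 -A0.
apply: eqmodg_trans (eqmodgM (eqmodg_refl _) (prodzD_eqmodg _ _ _)) _.
by rewrite mulKg; apply: eqmodg_refl.
Qed.

End CentralCommutators.

(** * Integer matrices *)

Section IntegerMatrices.
Local Open Scope ring_scope.

Lemma sorted_dvdz_nth_eq0 (d : seq int) (j : nat) :
  sorted dvdz d -> (find (pred1 (0 : int)) d <= j)%N -> d`_j = 0.
Proof.
move=> d_sorted le_j; case: (ltnP j (size d)) => [lt_j | ?]; last by rewrite nth_default.
have d0 : has (pred1 (0 : int)) d by rewrite has_find (leq_ltn_trans le_j lt_j).
have := sorted_leq_nth dvdz_trans dvdzz 0 d_sorted _ _ (leq_ltn_trans le_j lt_j) lt_j le_j.
by rewrite (eqP (nth_find 0 d0)) dvd0z => /eqP.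
Qed.

Lemma mulmx_unit_eq0 (R : comUnitRingType) (k n : nat) (x : 'M[R]_(k, n)) (A : 'M[R]_n) :
  A \in unitmx -> (x *m A == 0) = (x == 0).
Proof.
move=> Au; apply/eqP/eqP => [xA0 | ->]; last exact: mul0mx.
by rewrite -(mulmxK Au x) xA0 mul0mx.
Qed.

Lemma int_kernel_basis (n p : nat) (M : 'M[int]_(n, p)) :
  exists2 L : 'M[int]_n, L \in unitmx & exists2 r, (r <= n)%N &
    forall y : 'rV[int]_n, y *m M = 0 <-> forall q : 'I_n, (q < r)%N -> (y *m L) 0 q = 0.
Proof.
have [L Lu [R Ru [d d_sorted ->]]] := int_Smith_normal_form M.
set r := minn (find (pred1 (0 : int)) d) (minn n p).
exists L => //; exists r => [|y]; first by rewrite /r !geq_min leqnn orbT.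
rewrite !mulmxA; set z := y *m L; set D := \matrix_(i, j) _.
transitivity (z *m D = 0).
  by split=> [/eqP | ->]; [rewrite mulmx_unit_eq0 // => /eqP | apply: mul0mx].
have zDE j : (z *m D) 0 j = \sum_i z 0 i * d`_i *+ (i == j :> nat).
  by rewrite [LHS]mxE; apply: eq_bigr => i _; rewrite [D i j]mxE mulrnAr.
split=> [zD0 q lt_qr | z0].
  have lt_qp : (q < p)%N by apply: leq_trans lt_qr _; rewrite /r !geq_min leqnn !orbT.
  have /eqP := congr1 (fun v : 'rV[int]_p => v 0 (Ordinal lt_qp)) zD0.
  rewrite /= zDE (bigD1 q) //= eqxx mulr1n big1 ?addr0 => [|i ne_iq]; last first.
    by case: eqP => [/val_inj iq | _]; [rewrite iq eqxx in ne_iq | rewrite mulr0n].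
  rewrite [X in _ == X]mxE mulf_eq0 => /orP[/eqP // | /eqP dq0].
  have : (q < find (pred1 (0 : int)) d)%N by apply: leq_trans lt_qr (geq_minl _ _).
  by move/(before_find 0); rewrite /= dq0 eqxx.
apply/rowP => j; rewrite zDE mxE big1 // => i _.
case: (ltnP i r) => [/z0-> | le_ri]; first by rewrite mul0r mul0rn.
case: eqP => [eq_ij | _]; last by rewrite mulr0n.
rewrite sorted_dvdz_nth_eq0 ?mulr0 ?mul0rn //.
by move: le_ri; rewrite !geq_min [(n <= _)%N]leqNgt ltn_ord [(p <= _)%N]leqNgt eq_ij ltn_ord !orbF.
Qed.

Lemma int_row_span_square (N m : nat) (P : 'M[int]_(N, m)) :
  exists W : 'M[int]_m, (forall t, exists v : 'rV[int]_N, row t W = v *m P) /\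
    (forall z : 'rV[int]_N, exists y : 'rV[int]_m, z *m P = y *m W).
Proof.
have [L Lu [R _ [d _ ->]]] := int_Smith_normal_form P.
set D := \matrix_(i, j) _.
have pidD : (pid_mx m : 'M_(N, m)) *m ((pid_mx m : 'M_(m, N)) *m D) = D.
  rewrite mulmxA mul_pid_mx minnn; apply/matrixP => i j; rewrite !mxE.
  rewrite (bigD1 i) //= big1 ?addr0 => [|k ne_ki]; last first.
    by rewrite !mxE; case: eqP => [/val_inj ik | _]; [rewrite ik eqxx in ne_ki | rewrite mul0r].
  rewrite !mxE eqxx /=; case: eqP => [eq_ij | _]; last by rewrite mulr0.
  by rewrite eq_ij minnn ltn_ord mul1r.
exists ((pid_mx m : 'M_(m, N)) *m D *m R); split=> [t | z].
  by exists (row t (pid_mx m) *m invmx L); rewrite -!row_mul !mulmxA mulmxKV.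
by exists (z *m L *m pid_mx m); rewrite !mulmxA; congr (_ *m _); rewrite -!mulmxA pidD.
Qed.

Lemma sum_scale_deltaE (I : finType) (k : nat) (h : I -> 'I_k) (v : I -> int) j :
  (\sum_i v i *: delta_mx 0 (h i) : 'rV[int]_k) 0 j = \sum_(i | h i == j) v i.
Proof.
rewrite summxE [RHS]big_mkcond; apply: eq_bigr => i _.
by rewrite !mxE eqxx eq_sym; case: eqP; rewrite ?mulr1 ?mulr0.
Qed.

Lemma int_span_square (I : finType) (m : nat) (P : I -> 'rV[int]_m) :
  exists W : 'M[int]_m, (forall t, exists v : I -> int, row t W = \sum_i v i *: P i) /\
    (forall z : I -> int, exists y : 'rV[int]_m, \sum_i z i *: P i = y *m W).
Proof.
pose M := \matrix_(p < #|I|) P (enum_val p).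
have ME z : z *m M = \sum_p z 0 p *: P (enum_val p).
  by rewrite mulmx_sum_row; apply: eq_bigr => p _; rewrite rowK.
have [W [WM MW]] := int_row_span_square M.
exists W; split=> [t | z].
  have [v ->] := WM t; exists (fun i => v 0 (enum_rank i)).
  by rewrite ME [RHS]big_enum_val; apply: eq_bigr => p _; rewrite enum_valK.
have [y yW] := MW (\row_p z (enum_val p)); exists y.
by rewrite -yW ME [LHS]big_enum_val; apply: eq_bigr => p _; rewrite mxE.
Qed.

Lemma sum_delta_intr (k : nat) (u : 'I_k -> int) :
  (\sum_t (u t)%:~R *: (delta_mx 0 t : 'rV[int]_k) = \row_t u t)%R.
Proof. by rewrite [RHS]row_sum_delta; apply: eq_bigr => t _; rewrite mxE intz. Qed.

End IntegerMatrices.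

(** * The model group *)

Section BilinearForm.
Variables (R : comRingType) (n m : nat) (Lam : 'I_n -> 'I_n -> 'rV[R]_m).
Local Open Scope ring_scope.
Implicit Types x y w : 'rV[R]_n.

Definition bform x y : 'rV[R]_m := \sum_i \sum_j (x 0 i * y 0 j) *: Lam i j.

Lemma bformDl x y w : bform (x + y) w = bform x w + bform y w.
Proof.
rewrite /bform -big_split; apply: eq_bigr => i _; rewrite -big_split.
by apply: eq_bigr => j _; rewrite !mxE mulrDl scalerDl.
Qed.

Lemma bformDr x y w : bform w (x + y) = bform w x + bform w y.
Proof.
rewrite /bform -big_split; apply: eq_bigr => i _; rewrite -big_split.
by apply: eq_bigr => j _; rewrite !mxE mulrDr scalerDl.
Qed.

Lemma bform0l y : bform 0 y = 0.
Proof. by apply: (addrI (bform 0 y)); rewrite -bformDl !addr0. Qed.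

Lemma bform0r x : bform x 0 = 0.
Proof. by apply: (addrI (bform x 0)); rewrite -bformDr !addr0. Qed.

Lemma bformNl x y : bform (- x) y = - bform x y.
Proof. by apply: (addrI (bform x y)); rewrite -bformDl !subrr bform0l. Qed.

Lemma bformNr x y : bform x (- y) = - bform x y.
Proof. by apply: (addrI (bform x y)); rewrite -bformDr !subrr bform0r. Qed.

Definition commform x y := bform x y - bform y x.

Lemma bform_deltal i y : bform (delta_mx 0 i) y = \sum_j y 0 j *: Lam i j.
Proof.
rewrite /bform (bigD1 i) //= [X in _ + X]big1 ?addr0 => [|k ne_ki]; last first.
  by apply: big1 => j _; rewrite mxE (negbTE ne_ki) andbF mul0r scale0r.
by apply: eq_bigr => j _; rewrite mxE !eqxx mul1r.
Qed.

Lemma bform_deltar i x : bform x (delta_mx 0 i) = \sum_j x 0 j *: Lam j i.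
Proof.
apply: eq_bigr => j _; rewrite (bigD1 i) //= big1 ?addr0 => [|k ne_ki].
  by rewrite mxE !eqxx mulr1.
by rewrite mxE (negbTE ne_ki) andbF mulr0 scale0r.
Qed.

Lemma commform_deltal i y : commform (delta_mx 0 i) y = \sum_j y 0 j *: (Lam i j - Lam j i).
Proof.
rewrite /commform bform_deltal bform_deltar -sumrB.
by apply: eq_bigr => j _; rewrite scalerBr.
Qed.

Lemma commform_delta i j : commform (delta_mx 0 i) (delta_mx 0 j) = Lam i j - Lam j i.
Proof.
rewrite commform_deltal (bigD1 j) //= big1 ?addr0 => [|k ne_kj]; first by rewrite mxE !eqxx scale1r.
by rewrite mxE (negbTE ne_kj) andbF scale0r.
Qed.

Lemma commform_expand x y :
  commform x y = \sum_i \sum_j (x 0 i * y 0 j) *: commform (delta_mx 0 i) (delta_mx 0 j).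
Proof.
under [RHS]eq_bigr do under eq_bigr do rewrite commform_delta.
rewrite /commform {2}/bform exchange_big /bform -sumrB; apply: eq_bigr => i _.
by rewrite -sumrB; apply: eq_bigr => j _; rewrite scalerBr mulrC.
Qed.

End BilinearForm.

Definition heis (R : comRingType) (n m : nat) (Lam : 'I_n -> 'I_n -> 'rV[R]_m) :=
  ('rV[R]_n * 'rV[R]_m)%type.

HB.instance Definition _ R n m Lam := Choice.copy (@heis R n m Lam) ('rV[R]_n * 'rV[R]_m)%type.

Section HeisenbergGroup.
Variables (R : comRingType) (n m : nat) (Lam : 'I_n -> 'I_n -> 'rV[R]_m).
Local Notation H := (heis Lam).
Local Open Scope ring_scope.

Definition heis_mul (g h : H) : H := (g.1 + h.1, g.2 + h.2 + bform Lam g.1 h.1).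
Definition heis_one : H := (0, 0).
Definition heis_inv (g : H) : H := (- g.1, - g.2 + bform Lam g.1 g.1).

Lemma heis_mulA : associative heis_mul.
Proof.
move=> [x z] [y w] [u v]; rewrite /heis_mul /= addrA bformDl bformDr.
by congr pair; apply/rowP => t; rewrite !mxE; ring.
Qed.

Lemma heis_mul1g : left_id heis_one heis_mul.
Proof. by move=> [x z]; rewrite /heis_mul /= bform0l !add0r addr0. Qed.

Lemma heis_mulg1 : right_id heis_one heis_mul.
Proof. by move=> [x z]; rewrite /heis_mul /= bform0r !addr0. Qed.

Lemma heis_mulVg : left_inverse heis_one heis_inv heis_mul.
Proof.
move=> [x z]; rewrite /heis_mul /heis_one /= bformNl addNr; congr pair.
by apply/rowP => t; rewrite !mxE; ring.
Qed.

Lemma heis_mulgV : right_inverse heis_one heis_inv heis_mul.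
Proof.
move=> [x z]; rewrite /heis_mul /heis_one /= bformNr subrr; congr pair.
by apply/rowP => t; rewrite !mxE; ring.
Qed.

End HeisenbergGroup.

HB.instance Definition _ R n m Lam :=
  isGroup.Build (@heis R n m Lam) (@heis_mulA R n m Lam) (@heis_mul1g R n m Lam)
    (@heis_mulg1 R n m Lam) (@heis_mulVg R n m Lam) (@heis_mulgV R n m Lam).

Section HeisenbergCalculus.
Variables (R : comRingType) (n m : nat) (Lam : 'I_n -> 'I_n -> 'rV[R]_m).
Local Notation H := (heis Lam).
Local Open Scope group_scope.
Implicit Types g h : H.

Lemma heis_mulE g h : g * h = (g.1 + h.1, g.2 + h.2 + bform Lam g.1 h.1)%R.
Proof. by []. Qed.

Lemma heis_fstM g h : (g * h).1 = (g.1 + h.1)%R.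
Proof. by []. Qed.

Lemma heis_invE g : g^-1 = (- g.1, - g.2 + bform Lam g.1 g.1)%R.
Proof. by []. Qed.

Lemma heis_commE g h : [~ g, h] = (0%R, (bform Lam g.1 h.1 - bform Lam h.1 g.1)%R).
Proof.
case: g h => [x z] [y w].
rewrite /commg /conjg !heis_mulE !heis_invE /= !(bformDl, bformDr, bformNl, bformNr).
by congr pair; apply/rowP => t; rewrite !mxE; ring.
Qed.

Lemma heis_mul_central z h : ((0%R, z) : H) * h = (h.1, z + h.2)%R.
Proof. by rewrite heis_mulE /= bform0l add0r addr0. Qed.

Lemma heis_expg_central z k : ((0%R, z) : H) ^+ k = (0%R, z *+ k)%R.
Proof. by elim: k => [|k IHk]; rewrite ?expgS ?IHk ?heis_mul_central ?mulrS. Qed.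

Lemma heis_prodz_central (I : finType) (w : I -> 'rV[R]_m) u :
  prodz (fun t => ((0%R, w t) : H)) u = (0%R, \sum_t (u t)%:~R *: w t)%R.
Proof.
rewrite /prodz; apply: (big_rec2 (fun (g : H) s => g = (0%R, s))) => // t g s _ ->.
rewrite scaler_int; case: (u t) => p /=; rewrite heis_expg_central ?heis_invE /=.
  by rewrite heis_mul_central.
by rewrite bform0l oppr0 addr0 heis_mul_central.
Qed.

Lemma heis_fst_expg g k : (g ^+ k).1 = (g.1 *+ k)%R.
Proof. by elim: k => [|k IHk]; rewrite ?expgS ?heis_fstM ?IHk ?mulrS. Qed.

Lemma heis_fst_prodz (I : finType) (e : I -> H) u :
  (prodz e u).1 = (\sum_i (u i)%:~R *: (e i).1)%R.
Proof.
rewrite /prodz (big_morph fst heis_fstM (erefl (1 : H).1)).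
apply: eq_bigr => i _; case: (u i) => p /=; first by rewrite heis_fst_expg scaler_nat.
by rewrite heis_fst_expg NegzE scaleNr -scaler_nat.
Qed.

End HeisenbergCalculus.

Lemma heis_torsion_free (R : numDomainType) n m (Lam : 'I_n -> 'I_n -> 'rV[R]_m) :
  torsion_free (heis Lam).
Proof.
move=> g k k_gt0 gk1.
have mulrn_eq0 p q (v : 'M[R]_(p, q)) : (v *+ k)%R = 0%R -> v = 0%R.
  by rewrite -scaler_nat => /eqP; rewrite scalemx_eq0 pnatr_eq0 eqn0Ngt k_gt0 => /eqP.
have g1 : g.1 = 0%R by apply: mulrn_eq0; rewrite -heis_fst_expg gk1.
by move: gk1; case: g g1 => x z /= ->; rewrite heis_expg_central => -[/mulrn_eq0->].
Qed.

(** * The presented group *)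

Section Presentation.
Variables (n m : nat) (lam : 'I_n -> 'I_n -> 'I_m -> int).

Definition pres_form (i j : 'I_n) : 'rV[int]_m :=
  \row_t (if (i < j)%N then lam i j t else 0%R).

Local Notation H := (heis pres_form).

Definition heis_gen_a (i : 'I_n) : H := (delta_mx 0 i, 0)%R.
Definition heis_gen_c (t : 'I_m) : H := (0, delta_mx 0 t)%R.

Lemma heis_pres_rels : pres_rels lam heis_gen_a heis_gen_c.
Proof.
split=> [i j lt_ij | ]; last by split=> *; rewrite heis_commE /= ?bform0l ?bform0r subrr.
rewrite -[RHS]/(prodz heis_gen_c (lam i j)).
rewrite heis_commE /= -/(commform _ _ _) commform_delta /heis_gen_c heis_prodz_central.
by rewrite sum_delta_intr; congr pair; apply/rowP => t; rewrite !mxE lt_ij ltnNge ltnW // subr0.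
Qed.

Variables (G : groupType) (a : 'I_n -> G) (c : 'I_m -> G).
Hypothesis rels : pres_rels lam a c.
Hypothesis gen_ac : forall x : G, gen (fun y => range a y \/ range c y) x.
Local Open Scope group_scope.
Local Notation C := (gen (range c)).

Lemma pres_c_central t : center (c t).
Proof.
have [_ [rels_ac rels_cc]] := rels.
by apply: center_gen_commute gen_ac _ => y [[i ->] | [s ->]]; apply/commgP/eqP.
Qed.

Lemma pres_commg_genc x y : C [~ x, y].
Proof.
have [rels_aa [rels_ac rels_cc]] := rels.
apply: (commg_gen_generators (S := range c) gen_ac)
  => [z [t ->] | u v [[i ->] | [t ->]] [[j ->] | [s ->]]].
- exact: pres_c_central.
- case: (ltngtP i j) => [lt_ij | lt_ji | /val_inj->]; last by rewrite commgg.
    by rewrite rels_aa //; apply: gen_prodz.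
  by rewrite -invgR rels_aa //; apply: genV; apply: gen_prodz.
- by rewrite rels_ac.
- by rewrite -invgR rels_ac invg1.
- by rewrite rels_cc.
Qed.

Lemma pres_two_step : two_step_nilpotent G.
Proof.
by move=> x y; apply: center_gen (pres_commg_genc x y) => z [t ->]; apply: pres_c_central.
Qed.

(* Modulo C, [prodz a] is a morphism from Z^n whose image contains every generator. *)
Lemma pres_normal_form g : exists u, eqmodg (range c) (prodz a u) g.
Proof.
have C_central : forall y, range c y -> center y by move=> y [t ->]; apply: pres_c_central.
move: g (gen_ac g); apply: gen_ind => [|g h [u Eu] [v Ev] | y [[i ->] | [t ->]]].
- by exists (fun=> 0%R); rewrite prodz0; apply: eqmodg_refl.
- exists (fun i => u i - v i)%R.
  have AD := prodzD_eqmodg C_central pres_commg_genc a u (fun i => - v i)%R.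
  have AN := prodzN_eqmodg C_central pres_commg_genc a v.
  have EvV := eqmodgV C_central Ev.
  have := eqmodgM C_central Eu (eqmodg_trans (eqmodg_sym AN) EvV).
  exact: eqmodg_trans AD.
- by exists (fun s => (s == i)%:R%R); rewrite prodz_delta; apply: eqmodg_refl.
- by exists (fun=> 0%R); rewrite prodz0 /eqmodg invg1 mul1g; apply: gen_mem; exists t.
Qed.

Variable f : G -> H.
Hypothesis fM : forall x y, f (x * y) = f x * f y.
Hypothesis fa : forall i, f (a i) = heis_gen_a i.
Hypothesis fc : forall t, f (c t) = heis_gen_c t.

Lemma pres_fst_prodz (I : finType) (e : I -> G) u :
  (f (prodz e u)).1 = (\sum_i (u i)%:~R *: (f (e i)).1)%R.
Proof. by rewrite morph_prodz // heis_fst_prodz. Qed.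

Lemma pres_fst_prodz_a u : (f (prodz a u)).1 = (\row_i u i)%R.
Proof. by rewrite pres_fst_prodz -sum_delta_intr; apply: eq_bigr => i _; rewrite fa. Qed.

Lemma pres_f_prodz_c u : f (prodz c u) = (0, \row_t u t)%R.
Proof.
rewrite morph_prodz // -sum_delta_intr -heis_prodz_central.
by apply: eq_bigr => t _; rewrite fc.
Qed.

Lemma pres_c_comm s t : commute (c s) (c t).
Proof. exact: pres_c_central. Qed.

Lemma pres_decomposition g : exists u w, g = prodz a u * prodz c w.
Proof.
have [u /(gen_rangeP pres_c_comm) [w Ew]] := pres_normal_form g.
by exists u, w; rewrite -Ew mulVKg.
Qed.

Lemma pres_f_inj : injective f.
Proof.
apply: morph_injP => // g; have [u [w ->]] := pres_decomposition g.
rewrite fM => /[dup] /(congr1 fst); rewrite heis_fstM pres_fst_prodz_a pres_f_prodz_c addr0.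
move=> /rowP u0; have Au1 : prodz a u = 1 by apply: prodz_eq1 => i; have := u0 i; rewrite !mxE.
rewrite Au1 morph1 // !mul1g => -[/rowP w0].
by apply: prodz_eq1 => t; have := w0 t; rewrite !mxE.
Qed.

Lemma pres_commute_iff x y : commute x y <-> (f [~ x, y]).2 = 0%R.
Proof.
split=> [/commgP/eqP-> | xy]; first by rewrite morph1.
apply/commgP/eqP/pres_f_inj; rewrite morph1 // morph_commg //.
by move: xy; rewrite morph_commg // heis_commE /= => ->.
Qed.


Lemma pres_center_iff g :
  center g <-> forall i, commform pres_form (delta_mx 0%R i) (f g).1 = 0%R.
Proof.
have comm_a i : commute (a i) g <-> commform pres_form (delta_mx 0%R i) (f g).1 = 0%R.
  by rewrite pres_commute_iff morph_commg // heis_commE fa.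
split=> [gZ i | ag]; first exact/comm_a/gZ.
apply: center_gen_commute gen_ac _ => y [[i ->] | [t ->]]; first exact/comm_a/ag.
exact/commute_sym/pres_c_central.
Qed.

Lemma pres_C_iff g : C g <-> (f g).1 = 0%R.
Proof.
split=> [/(gen_rangeP pres_c_comm) [w ->] | ]; first by rewrite pres_f_prodz_c.
have [u [w ->]] := pres_decomposition g.
rewrite fM heis_fstM pres_fst_prodz_a pres_f_prodz_c addr0 => /rowP u0.
rewrite prodz_eq1 ?mul1g; first exact: gen_prodz.
by move=> i; have := u0 i; rewrite !mxE.
Qed.

Lemma pres_fin_gen : fin_gen G.
Proof.
exists ([seq a i | i <- enum 'I_n] ++ [seq c t | t <- enum 'I_m]) => x.
apply: (gen_mono _ (gen_ac x)) => y [[i ->] | [t ->]]; rewrite mem_cat map_f ?orbT ?mem_enum //.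
Qed.

Lemma pres_torsion_free : torsion_free G.
Proof.
move=> x k k_gt0 xk1; apply: pres_f_inj; rewrite morph1 //.
by apply: heis_torsion_free k_gt0 _; rewrite -morphX // xk1 morph1.
Qed.

Lemma pres_c_indep u : prodz c u = 1 -> forall t, u t = 0%R.
Proof.
move/(congr1 f); rewrite pres_f_prodz_c morph1 // => -[/rowP u0] t.
by have := u0 t; rewrite !mxE.
Qed.

Lemma pres_malcev : malcev_basis a c.
Proof.
split; first exact: pres_c_comm.
split; first exact: pres_c_indep.
split; first by move=> x; apply: gen_trans => _ [y [z ->]]; apply: pres_commg_genc.
split; first by move=> x; apply: center_gen => _ [t ->]; apply: pres_c_central.
split; first exact: pres_commg_genc.
split; first exact: pres_normal_form.
move=> u /pres_C_iff; rewrite pres_fst_prodz_a => /rowP u0 i.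
by have := u0 i; rewrite !mxE.
Qed.

Definition pres_center_mx : 'M[int]_(n, n * m) :=
  (\matrix_(j, p) mxvec (\matrix_(i, t) (pres_form i j - pres_form j i) 0 t) 0 p)%R.

Lemma pres_center_mxP g : center g <-> ((f g).1 *m pres_center_mx = 0)%R.
Proof.
have E y i t : (y *m pres_center_mx)%R 0%R (mxvec_index i t) =
    commform pres_form (delta_mx 0%R i) y 0%R t.
  rewrite commform_deltal [LHS]mxE summxE; apply: eq_bigr => j _.
  by rewrite [pres_center_mx _ _]mxE mxvecE !mxE.
rewrite pres_center_iff; split=> [y0 | /rowP y0 i].
  by apply/rowP => p; case/mxvec_indexP: p => i t; rewrite E y0 !mxE.
by apply/rowP => t; rewrite -E y0 !mxE.
Qed.

(* [L] comes from [int_kernel_basis]: the rows of [L^-1] of index at least [r] are the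
   coordinates of a basis D of the radical, those of index below [r] give generators of G
   modulo Z(G). *)
Section CenterBasis.
Variables (L : 'M[int]_n) (r : nat).
Hypotheses (L_unit : L \in unitmx) (le_rn : (r <= n)%N).
Hypothesis center_L :
  forall g, center g <-> forall q : 'I_n, (q < r)%N -> ((f g).1 *m L)%R 0%R q = 0%R.

Local Notation coord g := (mulmx (f g).1 L).

Definition ord_lo (p : 'I_r) : 'I_n := widen_ord le_rn p.

Lemma ord_hi_subproof (s : 'I_(n - r)) : (r + s < n)%N.
Proof. by rewrite -ltn_subRL. Qed.

Definition ord_hi (s : 'I_(n - r)) : 'I_n := Ordinal (ord_hi_subproof s).

Lemma ord_lo_inj : injective ord_lo.
Proof. by move=> p p' [/val_inj]. Qed.

Lemma ord_hi_inj : injective ord_hi.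
Proof. by move=> s s' [/addnI/val_inj]. Qed.

Definition Lrow (k : 'I_n) : G := prodz a (fun j => invmx L k j).
Definition center_gens (s : 'I_(n - r)) : G := Lrow (ord_hi s).
Definition quot_gens (p : 'I_r) : G := Lrow (ord_lo p).

Lemma coord_Lrow k : coord (Lrow k) = delta_mx 0%R k.
Proof.
rewrite pres_fst_prodz_a -row1 -(mulVmx L_unit) row_mul.
by congr (_ *m _)%R; apply/rowP => j; rewrite !mxE.
Qed.

Lemma coord_prodz (I : finType) (e : I -> G) u :
  coord (prodz e u) = (\sum_i (u i)%:~R *: coord (e i))%R.
Proof.
by rewrite pres_fst_prodz mulmx_suml; apply: eq_bigr => i _; rewrite scalemxAl.
Qed.

Lemma coordM x y : coord (x * y) = (coord x + coord y)%R.
Proof. by rewrite fM heis_fstM mulmxDl. Qed.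

Lemma coord_inj x y : coord x = coord y -> (f x).1 = (f y).1.
Proof. by move=> xy; rewrite -(mulmxK L_unit (f x).1) xy mulmxK. Qed.

Lemma coordV x : coord x^-1 = (- coord x)%R.
Proof. by rewrite morphV // heis_invE mulNmx. Qed.

Lemma coord_center_gens v :
  coord (prodz center_gens v) = (\sum_s v s *: delta_mx 0 (ord_hi s))%R.
Proof. by rewrite coord_prodz; apply: eq_bigr => s _; rewrite intz coord_Lrow. Qed.

Lemma coord_quot_gens v :
  coord (prodz quot_gens v) = (\sum_p v p *: delta_mx 0 (ord_lo p))%R.
Proof. by rewrite coord_prodz; apply: eq_bigr => p _; rewrite intz coord_Lrow. Qed.

Lemma ord_hi_ge s : (r <= ord_hi s)%N.
Proof. exact: leq_addr. Qed.

Lemma center_gens_central s : center (center_gens s).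
Proof.
apply/center_L => q lt_qr; rewrite coord_Lrow mxE eqxx.
by case: eqP => // qE; move: lt_qr; rewrite qE ltnNge ord_hi_ge.
Qed.

Lemma center_gen_basis x : center x -> gen (fun y => range c y \/ range center_gens y) x.
Proof.
move=> xZ; pose P := prodz center_gens (fun s => coord x 0%R (ord_hi s)).
have coordP : coord P = coord x.
  apply/rowP => j; rewrite coord_center_gens sum_scale_deltaE.
  case: (ltnP j r) => [lt_jr | le_rj].
    rewrite big_pred0 ?(proj1 (center_L x) xZ j lt_jr) // => s.
    by case: eqP => // jE; move: lt_jr; rewrite -jE ltnNge ord_hi_ge.
  have lt_jr_nr : (j - r < n - r)%N by rewrite ltn_sub2r // (leq_ltn_trans le_rj).
  set s0 := Ordinal lt_jr_nr; have jE : j = ord_hi s0 by apply: val_inj; rewrite /= subnKC.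
  by rewrite (big_pred1 s0) => [|s]; rewrite jE // (inj_eq ord_hi_inj).
have PxC : C (P^-1 * x).
  by apply/pres_C_iff; rewrite fM heis_fstM morphV // heis_invE /= (coord_inj coordP) addNr.
rewrite -(mulVKg P x); apply: genM.
  by apply: (gen_mono _ (gen_prodz _)) => y; right.
by apply: (gen_mono _ PxC) => y; left.
Qed.

Lemma coord1 : coord 1 = 0%R.
Proof. by rewrite morph1 // mul0mx. Qed.

Lemma coord_prodz_c u : coord (prodz c u) = 0%R.
Proof. by rewrite pres_f_prodz_c mul0mx. Qed.

Lemma pres_center_basis : center_basis c center_gens.
Proof.
split; first exact: pres_c_central.
split; first exact: center_gens_central.
split.
  move=> x; split; first exact: center_gen_basis.
  by apply: center_gen => y [[t ->] | [s ->]]; [apply: pres_c_central | apply: center_gens_central].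
move=> u v uv1; change (prodz c u * prodz center_gens v = 1) in uv1.
have v0 s : v s = 0%R.
  have /(congr1 (fun g => coord g 0%R (ord_hi s))) := uv1.
  rewrite coordM coord_prodz_c add0r coord_center_gens coord1 sum_scale_deltaE mxE.
  by rewrite (big_pred1 s) // => s'; rewrite (inj_eq ord_hi_inj).
by split=> //; apply: pres_c_indep; move: uv1; rewrite (prodz_eq1 _ v0) mulg1.
Qed.

Definition quot_coord g : 'rV[rat]_r := (\row_p (coord g 0%R (ord_lo p))%:~R)%R.

Lemma quot_coordM x y : quot_coord (x * y) = (quot_coord x + quot_coord y)%R.
Proof. by apply/rowP => p; rewrite /quot_coord coordM !mxE intrD. Qed.

Lemma quot_coord_center x : center x -> quot_coord x = 0%R.
Proof.
move=> xZ; apply/rowP => p; rewrite mxE (proj1 (center_L x) xZ) ?mxE ?mulr0z //.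
exact: (ltn_ord p).
Qed.

Lemma quot_coord_gens p : quot_coord (quot_gens p) = delta_mx 0%R p.
Proof.
apply/rowP => q; rewrite mxE coord_Lrow !mxE (inj_eq ord_lo_inj).
by case: (q == p).
Qed.

Lemma quot_gens_gen x : gen (fun y => center y \/ range quot_gens y) x.
Proof.
pose P := prodz quot_gens (fun p => coord x 0%R (ord_lo p)).
have PxZ : center (P^-1 * x).
  apply/center_L => q lt_qr; have qE : ord_lo (Ordinal lt_qr) = q by apply: val_inj.
  rewrite coordM coordV coord_quot_gens [LHS]mxE [X in (X + _)%R]mxE sum_scale_deltaE.
  by rewrite (big_pred1 (Ordinal lt_qr)) ?qE ?addNr // => p; rewrite -qE (inj_eq ord_lo_inj).
rewrite -(mulVKg P x); apply: genM; last by apply: gen_mem; left.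
by apply: (gen_mono _ (gen_prodz _)) => y; right.
Qed.

Lemma pres_quot_rank : is_rank_quot_center G r.
Proof.
split=> [|r' g gen_g]; first by exists quot_gens; apply: quot_gens_gen.
pose M := (\matrix_j quot_coord (g j))%R.
apply: (delta_submx_leq (M := M)) => p; rewrite -quot_coord_gens.
apply: (gen_morph_submx quot_coordM _ (gen_g _)) => y [/quot_coord_center-> | [j ->]].
  exact: sub0mx.
by rewrite -[quot_coord _](rowK (fun j => quot_coord (g j))) row_sub.
Qed.

Definition center_family (i : 'I_(m + (n - r))) : G :=
  match split i with inl t => c t | inr s => center_gens s end.

Lemma center_family_central i : center (center_family i).
Proof.
rewrite /center_family; case: split => [t | s]; first exact: pres_c_central.
exact: center_gens_central.
Qed.

Lemma center_family_lshift t : center_family (lshift _ t) = c t.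
Proof. by rewrite /center_family (unsplitK (inl _ t)). Qed.

Lemma center_family_rshift s : center_family (rshift _ s) = center_gens s.
Proof. by rewrite /center_family (unsplitK (inr _ s)). Qed.

Lemma center_familyP x : center x <-> gen (range center_family) x.
Proof.
split=> [/center_gen_basis | ]; last by apply: center_gen => _ [i ->]; apply: center_family_central.
apply: gen_mono => y [[t ->] | [s ->]].
  by exists (lshift _ t); rewrite center_family_lshift.
by exists (rshift _ s); rewrite center_family_rshift.
Qed.

Lemma center_family_indep w : prodz center_family w = 1 -> forall i, w i = 0%R.
Proof.
rewrite /prodz big_split_ord /=.
under eq_bigr do rewrite center_family_lshift.
under [X in _ * X]eq_bigr do rewrite center_family_rshift.
case/(proj2 (proj2 (proj2 pres_center_basis))) => u0 v0 i.
by rewrite -(splitK i); case: split => [t | s]; [apply: u0 | apply: v0].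
Qed.

Lemma pres_center_rank : is_rank_sub (@center G) (m + (n - r)).
Proof.
split=> [|r' g gZ gP].
  by exists center_family; split; [apply: center_family_central | apply: center_familyP].
apply: (free_basis_size_leq (e := center_family)) => [s t | | i | t].
- exact: center_family_central.
- exact: center_family_indep.
- exact/center_familyP/gZ.
- exact/gP/center_family_central.
Qed.

End CenterBasis.

Definition comm_vec (ij : 'I_n * 'I_n) : 'rV[int]_m :=
  commform pres_form (delta_mx 0%R ij.1) (delta_mx 0%R ij.2).

Lemma f_commg_a (ij : 'I_n * 'I_n) : f [~ a ij.1, a ij.2] = (0%R, comm_vec ij).
Proof. by rewrite morph_commg // !fa heis_commE. Qed.

Section DerivedGenerators.
Variable W : 'M[int]_m.
Hypothesis W_span : forall t, exists v, row t W = (\sum_ij v ij *: comm_vec ij)%R.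
Hypothesis span_W : forall z, exists y, (\sum_ij z ij *: comm_vec ij = y *m W)%R.

Definition derived_gens (t : 'I_m) : G := prodz c (fun s => W t s).

Lemma f_prodz_derived_gens w :
  f (prodz derived_gens w) = (0, \sum_t (w t)%:~R *: row t W)%R.
Proof.
rewrite morph_prodz // -heis_prodz_central; apply: eq_bigr => t _.
rewrite /derived_gens pres_f_prodz_c; suff -> : (\row_s W t s)%R = row t W by [].
by apply/rowP => s; rewrite !mxE.
Qed.

Lemma derived_gens_derived t : derived (derived_gens t).
Proof.
have [v vE] := W_span t.
suff -> : derived_gens t = prodz (fun ij : 'I_n * 'I_n => [~ a ij.1, a ij.2]) v.
  apply: gen_prod => ij; apply: gen_zexpg; apply: gen_mem.
  by exists (a ij.1), (a ij.2).
apply: pres_f_inj; rewrite /derived_gens pres_f_prodz_c morph_prodz //.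
have -> : prodz (fun ij => f [~ a ij.1, a ij.2]) v = prodz (fun ij => (0%R, comm_vec ij) : H) v.
  by apply: eq_bigr => ij _; rewrite f_commg_a.
rewrite heis_prodz_central; congr pair.
transitivity (row t W); first by apply/rowP => s; rewrite !mxE.
by rewrite vE; apply: eq_bigr => ij _; rewrite intz.
Qed.

Lemma commg_derived_gens x y : gen (range derived_gens) [~ x, y].
Proof.
have [w wE] := span_W (fun ij => (f x).1 0%R ij.1 * (f y).1 0%R ij.2)%R.
suff -> : [~ x, y] = prodz derived_gens (fun t => w 0%R t) by apply: gen_prodz.
apply: pres_f_inj; rewrite morph_commg // heis_commE f_prodz_derived_gens -/(commform _ _ _).
rewrite commform_expand pair_big /= -/(comm_vec _) wE mulmx_sum_row; congr pair.
by apply: eq_bigr => t _; rewrite intz.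
Qed.

End DerivedGenerators.

Lemma pres_derived_rank : exists2 r3, is_rank_sub (@derived G) r3 & (r3 <= m)%N.
Proof.
have [W [W_span span_W]] := int_span_square comm_vec.
pose gens_of r := exists g : 'I_r -> G,
  (forall i, derived (g i)) /\ (forall x, derived x <-> gen (range g) x).
have gens_m : gens_of m.
  exists (derived_gens W); split=> [t | x]; first exact: derived_gens_derived.
  split; first by apply: gen_trans => _ [y [z ->]]; apply: commg_derived_gens.
  by apply: gen_trans => _ [t ->]; apply: derived_gens_derived.
have [r3 [g gP] r3_min] := ex_minn_prop gens_m.
exists r3; last exact: r3_min.
by split=> [|r' g' *]; [exists g | apply: r3_min; exists g'].
Qed.

End Presentation.

Theorem corollary4p4 (n m : nat) (hn : (2 <= n)%N) (hm : (1 <= m)%N)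
    (lam : 'I_n -> 'I_n -> 'I_m -> int)
    (G : groupType) (a : 'I_n -> G) (c : 'I_m -> G)
    (hG : presented_by lam a c) :
  (fin_gen G /\ torsion_free G /\ two_step_nilpotent G /\ malcev_basis a c) /\
  (exists (k : nat) (d : 'I_k -> G),
      center_basis c d /\ is_rank_quot_center G (n - k)) /\
  (exists r1 r2 : nat, is_rank_quot_center G r1 /\ is_rank_sub (@center G) r2 /\
      (r1 + r2 = n + m)%N) /\
  (exists r3 r2 : nat, is_rank_sub (@derived G) r3 /\ is_rank_sub (@center G) r2 /\
      (r3 <= m <= r2)%N).
Proof.
have [rels [gen_ac univ]] := hG.
have [f [fM [fa fc]]] := univ _ _ _ (heis_pres_rels lam).
have [L L_unit [r le_rn kerL]] := int_kernel_basis (pres_center_mx lam).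
have center_L g : center g <-> forall q : 'I_n, (q < r)%N -> ((f g).1 *m L)%R 0%R q = 0%R.
  exact: iff_trans (pres_center_mxP rels gen_ac fM fa fc g) (kerL _).
have quot_rank := pres_quot_rank fM fa L_unit le_rn center_L.
have center_rank := pres_center_rank rels gen_ac fM fa fc L_unit center_L.
have [r3 derived_rank le_r3m] := pres_derived_rank rels gen_ac fM fa fc.
split.
  split; first exact: pres_fin_gen gen_ac.
  split; first exact (pres_torsion_free rels gen_ac fM fa fc).
  split; first exact (pres_two_step rels gen_ac).
  exact (pres_malcev rels gen_ac fM fa fc).
split.
  exists (n - r)%N, (@center_gens _ _ a L r); rewrite subKn //.
  by split; first exact (pres_center_basis rels gen_ac fM fa fc L_unit center_L).
split; first by exists r, (m + (n - r))%N; do !split=> //; rewrite addnCA subnKC // addnC.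
by exists r3, (m + (n - r))%N; do !split=> //; rewrite le_r3m leq_addr.
Qed.
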